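(* Let $W\in\mathbb{R}^{n\times n}$ be positive definite (i.e. $x^TWx>0$ for all nonzero $x$; $W$ need not be symmetric), with symmetric part $H=\frac12(W+W^T)$ and skew-symmetric part $S=\frac12(W-W^T)$. Write $S=L_s+U_s$ where $L_s$ is the (strictly) lower triangular part and $U_s=-L_s^T$ the upper triangular part of $S$, and assume $L_s\neq 0$. Let $B\in\mathbb{R}^{m\times n}$ with $\operatorname{rank}(B)<m\le n$, let $$A=\begin{pmatrix} W & B^T\\ -B & 0\end{pmatrix},$$ and let $b\in\mathbb{R}^{n+m}$ lie in the range of $A$. For $\omega>0$ let $P=\frac1\omega(I+\omega L_s)(I+\omega U_s)$ and $$M=\begin{pmatrix} P & B^T\\ -B & 0\end{pmatrix}.$$ If $$0<\omega<\frac{-\lambda_{\max}(H)+\sqrt{\lambda_{\max}(H)^2+16\|L_s\|_2^2}}{4\|L_s\|_2^2},$$ then the iteration $x^{(k+1)}=x^{(k)}+M^\dagger(b-Ax^{(k)})$, $k=0,1,2,\dots$, is convergent.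
   Context: $M^\dagger$ is the Moore–Penrose inverse of $M$; $\lambda_{\max}(H)$ is the largest eigenvalue of $H$; $\|\cdot\|_2$ is the spectral norm. The iteration is called convergent if the sequence $x^{(k)}$ converges (to a solution of $Ax=b$) for every initial guess $x^{(0)}$; equivalently, with $T=I-M^\dagger A$, the limit $\lim_{k\to\infty}T^k$ exists. *)

From HB Require Import structures.
From mathcomp Require Import all_boot all_order all_algebra.
From mathcomp Require Import boolp classical_sets reals topology normedtype sequences.
Set Implicit Arguments. Unset Strict Implicit. Unset Printing Implicit Defensive.
Import Order.TTheory GRing.Theory Num.Theory numFieldNormedType.Exports.
Local Open Scope ring_scope.
Local Open Scope classical_set_scope.

Section Defs.
Variable R : realType.

Definition is_MP_inverse (p q : nat) (M : 'M[R]_(p, q)) (X : 'M[R]_(q, p)) : Prop :=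
  [/\ M *m X *m M = M, X *m M *m X = X,
      (M *m X)^T = M *m X & (X *m M)^T = X *m M].

(* The Moore-Penrose inverse M^dagger (it exists and is unique). *)
Definition mp_pinv (p q : nat) (M : 'M[R]_(p, q)) : 'M[R]_(q, p) :=
  xget 0 [set X | is_MP_inverse M X].

Definition lambda_max (n : nat) (H : 'M[R]_n) : R :=
  sup [set a : R | eigenvalue H a].

Definition eucl_norm (n : nat) (v : 'cV[R]_n) : R :=
  Num.sqrt (\sum_i v i 0 ^+ 2).

Definition spec_norm (p q : nat) (A : 'M[R]_(p, q)) : R :=
  sup [set eucl_norm (A *m x) | x in [set x : 'cV[R]_q | eucl_norm x = 1]].

Definition posdef (n : nat) (W : 'M[R]_n) : Prop :=
  forall x : 'cV[R]_n, x != 0 -> 0 < (x^T *m W *m x) 0 0.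

Definition strict_lower (n : nat) (S : 'M[R]_n) : 'M[R]_n :=
  \matrix_(i, j) (if (j < i)%N then S i j else 0).

Definition iterate_seq (p : nat) (Mp A : 'M[R]_p) (b x0 : 'cV[R]_p) (k : nat)
  : 'cV[R]_p := iter k (fun x => x + Mp *m (b - A *m x)) x0.

Definition iteration_convergent (p : nat) (Mp A : 'M[R]_p) (b : 'cV[R]_p) : Prop :=
  forall x0 : 'cV[R]_p, exists xs : 'cV[R]_p,
    A *m xs = b /\
    forall i j, (fun k => iterate_seq Mp A b x0 k i j) @ \oo --> xs i j.

End Defs.

From HB Require Import structures.
From mathcomp Require Import all_boot all_order all_algebra.
From mathcomp Require Import boolp classical_sets reals topology normedtype sequences.
From mathcomp Require Import ring lra.
Import Order.TTheory GRing.Theory Num.Theory numFieldNormedType.Exports.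
Set Implicit Arguments. Unset Strict Implicit. Unset Printing Implicit Defensive.
Local Open Scope ring_scope.

(* Write the error of the iteration as e = (u; v).  Coercivity of P puts the
   range of A inside the range of M, so M M^+ fixes A e and one step gives
   P u' + B^T v' = (P - W) u and B u' = 0; hence the energy E(u) = u^T P u
   satisfies E(u') = u'^T (P - W) u.  Here P - W = 1/omega I - omega Ls Ls^T - H
   is symmetric, W is coercive, and the bound on omega is exactly what makes
   2P - W coercive.  Together these give |z^T (P - W) z| <= (1 - eps) z^T P z,
   and polarization turns this into E(u') <= (1 - eps)/(1 + eps) E(u), so u
   tends to 0 geometrically.  The component of v in ker B^T never changes and
   B^T v' is determined by u and u', so v converges as well. *)

Section BilinearForm.
Variable R : realType.

Definition bform k (G : 'M[R]_k) (a b : 'cV[R]_k) : R := (a^T *m G *m b) 0 0.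

Definition nsq k (a : 'cV[R]_k) : R := \sum_i a i 0 ^+ 2.

Definition coercive k (G : 'M[R]_k) : Prop :=
  exists2 c, 0 < c & forall x, c * nsq x <= bform G x x.

Lemma bformDl k (G : 'M[R]_k) a1 a2 b : bform G (a1 + a2) b = bform G a1 b + bform G a2 b.
Proof. by rewrite /bform linearD /= !mulmxDl mxE. Qed.

Lemma bformDr k (G : 'M[R]_k) a b1 b2 : bform G a (b1 + b2) = bform G a b1 + bform G a b2.
Proof. by rewrite /bform !mulmxDr mxE. Qed.

Lemma bformZl k (G : 'M[R]_k) t a b : bform G (t *: a) b = t * bform G a b.
Proof. by rewrite /bform linearZ /= -!scalemxAl mxE. Qed.

Lemma bformZr k (G : 'M[R]_k) t a b : bform G a (t *: b) = t * bform G a b.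
Proof. by rewrite /bform -!scalemxAr mxE. Qed.

Lemma bformNl k (G : 'M[R]_k) a b : bform G (- a) b = - bform G a b.
Proof. by rewrite -scaleN1r bformZl mulN1r. Qed.

Lemma bformNr k (G : 'M[R]_k) a b : bform G a (- b) = - bform G a b.
Proof. by rewrite -scaleN1r bformZr mulN1r. Qed.

Lemma bform0l k (G : 'M[R]_k) b : bform G 0 b = 0.
Proof. by rewrite -(scale0r 0) bformZl mul0r. Qed.

Lemma bformD k (G1 G2 : 'M[R]_k) a b : bform (G1 + G2) a b = bform G1 a b + bform G2 a b.
Proof. by rewrite /bform mulmxDr mulmxDl mxE. Qed.

Lemma bformZ k (G : 'M[R]_k) t a b : bform (t *: G) a b = t * bform G a b.
Proof. by rewrite /bform -scalemxAr -scalemxAl mxE. Qed.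

Lemma bformB k (G1 G2 : 'M[R]_k) a b : bform (G1 - G2) a b = bform G1 a b - bform G2 a b.
Proof. by rewrite bformD -scaleN1r bformZ mulN1r. Qed.

Lemma bform_tr k (G : 'M[R]_k) a b : bform G a b = bform G^T b a.
Proof.
rewrite /bform; have -> : (a^T *m G *m b) 0 0 = (a^T *m G *m b)^T 0 0 by rewrite [RHS]mxE.
by rewrite !trmx_mul trmxK mulmxA.
Qed.

Lemma bform1E k (a b : 'cV[R]_k) : bform 1%:M a b = \sum_i a i 0 * b i 0.
Proof. by rewrite /bform mulmx1 mxE; apply: eq_bigr => i _; rewrite mxE. Qed.

Lemma bform_mulmx k (G : 'M[R]_k) a b : bform G a b = bform 1%:M a (G *m b).
Proof. by rewrite /bform mulmx1 mulmxA. Qed.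

Lemma nsqE k (a : 'cV[R]_k) : nsq a = bform 1%:M a a.
Proof. by rewrite bform1E; apply: eq_bigr => i _; rewrite expr2. Qed.

Lemma nsq_ge0 k (a : 'cV[R]_k) : 0 <= nsq a.
Proof. by apply: sumr_ge0 => i _; rewrite sqr_ge0. Qed.

Lemma nsq_eq0 k (a : 'cV[R]_k) : nsq a = 0 -> a = 0.
Proof.
move=> /eqP; rewrite psumr_eq0 => [/allP a0|i _]; last by rewrite sqr_ge0.
apply/matrixP => i j; rewrite ord1 mxE.
by have := a0 i (mem_index_enum _); rewrite sqrf_eq0 => /eqP.
Qed.

Lemma nsq_gt0 k (a : 'cV[R]_k) : a != 0 -> 0 < nsq a.
Proof. by move=> a0; rewrite lt_def nsq_ge0 andbT; apply: contraNneq a0 => /nsq_eq0 ->. Qed.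

Lemma nsqZ k t (a : 'cV[R]_k) : nsq (t *: a) = t ^+ 2 * nsq a.
Proof. by rewrite !nsqE bformZl bformZr mulrA expr2. Qed.

Lemma nsq_entry_le k (a : 'cV[R]_k) i : a i 0 ^+ 2 <= nsq a.
Proof. by rewrite /nsq (bigD1 i) //= lerDl; apply: sumr_ge0 => j _; exact: sqr_ge0. Qed.

Lemma trmx_mul_self_eq0 k (a : 'cV[R]_k) : a^T *m a = 0 -> a = 0.
Proof. by move=> aa0; apply: nsq_eq0; rewrite nsqE /bform mulmx1 aa0 mxE. Qed.

Lemma bform_skew k (S : 'M[R]_k) x : S^T = - S -> bform S x x = 0.
Proof.
by move=> skS; have := bform_tr S x x; rewrite skS -scaleN1r bformZ mulN1r; lra.
Qed.

Lemma bform_sym_part k (G : 'M[R]_k) x : bform G x x = bform (2^-1 *: (G + G^T)) x x.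
Proof. by rewrite bformZ bformD -bform_tr; field. Qed.

Lemma bform_expand k (G : 'M[R]_k) a b t : G^T = G ->
  bform G (a + t *: b) (a + t *: b) =
  bform G a a + 2 * t * bform G a b + t ^+ 2 * bform G b b.
Proof. by move=> sG; rewrite !(bformDl, bformDr, bformZl, bformZr) (bform_tr G b a) sG; ring. Qed.

Lemma bform_CS k (G : 'M[R]_k) a b : G^T = G -> (forall x, 0 <= bform G x x) ->
  bform G a b ^+ 2 <= bform G a a * bform G b b.
Proof.
move=> sG psd; have E t := bform_expand a b t sG.
have [Gb0|Gbn0] := eqVneq (bform G b b) 0.
  have [->|Gabn0] := eqVneq (bform G a b) 0; first by rewrite Gb0 expr0n mulr0.
  have := psd (a + (- (bform G a a + 1) / (2 * bform G a b)) *: b).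
  rewrite E Gb0 mulr0 addr0.
  have -> : 2 * (- (bform G a a + 1) / (2 * bform G a b)) * bform G a b =
    - (bform G a a + 1) by field.
  lra.
have Gbp : 0 < bform G b b by rewrite lt_def Gbn0 psd.
have := psd (a + (- bform G a b / bform G b b) *: b).
rewrite E -(pmulr_lge0 _ Gbp).
set r := bform G a b; set s := bform G b b; set p := bform G a a.
have -> : (p + 2 * (- r / s) * r + (- r / s) ^+ 2 * s) * s = p * s - r ^+ 2.
  by field; rewrite /s.
lra.
Qed.

Lemma bform_polar_le k (N G : 'M[R]_k) a b : N^T = N ->
  (forall z, `|bform N z z| <= bform G z z) ->
  2 * bform N a b <= bform G a a + bform G b b.
Proof.
move=> sN NG.
have hN : bform N (a + b) (a + b) - bform N (a - b) (a - b) = 4 * bform N a b.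
  by rewrite !(bformDl, bformDr, bformNl, bformNr) (bform_tr N b a) sN; ring.
have hG : bform G (a + b) (a + b) + bform G (a - b) (a - b) =
    2 * (bform G a a + bform G b b).
  by rewrite !(bformDl, bformDr, bformNl, bformNr); ring.
have := NG (a + b); have := NG (a - b); rewrite !ler_norml; lra.
Qed.

End BilinearForm.

Section MoorePenrose.
Variable R : realType.

Lemma gram_unitmx p r (C : 'M[R]_(p, r)) : row_free C^T -> C^T *m C \in unitmx.
Proof.
move=> fC; rewrite -row_free_unit; apply: inj_row_free => v vCC0.
have /trmx_mul_self_eq0 Cv0 : (C *m v^T)^T *m (C *m v^T) = 0.
  by rewrite trmx_mul trmxK mulmxA -(mulmxA v) vCC0 mul0mx.
apply/eqP; rewrite -(mulmx_free_eq0 _ fC); apply/eqP.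
by rewrite -(trmxK (v *m C^T)) trmx_mul trmxK Cv0 linear0.
Qed.

Lemma is_MP_inverse_rank_factor p q r (C : 'M[R]_(p, r)) (F : 'M[R]_(r, q)) :
  row_free C^T -> row_free F ->
  is_MP_inverse (C *m F) (F^T *m invmx (F *m F^T) *m invmx (C^T *m C) *m C^T).
Proof.
move=> fC fF; have uC := gram_unitmx fC.
have uF : F *m F^T \in unitmx by have := @gram_unitmx _ _ F^T; rewrite trmxK; apply.
have sG1 : (invmx (C^T *m C))^T = invmx (C^T *m C) by rewrite trmx_inv trmx_mul trmxK.
have sG2 : (invmx (F *m F^T))^T = invmx (F *m F^T) by rewrite trmx_inv trmx_mul trmxK.
move: (invmx (C^T *m C)) (invmx (F *m F^T)) (mulVmx uC) (mulmxV uF) sG1 sG2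
  => G1 G2 G1C G2F sG1 sG2.
have MX : C *m F *m (F^T *m G2 *m G1 *m C^T) = C *m G1 *m C^T.
  by rewrite -!mulmxA (mulmxA F) (mulmxA (F *m F^T)) G2F mul1mx.
have XM : F^T *m G2 *m G1 *m C^T *m (C *m F) = F^T *m G2 *m F.
  by rewrite !mulmxA -(mulmxA _ C^T) -(mulmxA _ G1) G1C mulmx1.
split.
- by rewrite MX -!mulmxA (mulmxA C^T) (mulmxA G1) G1C mul1mx.
- by rewrite XM -!mulmxA (mulmxA F) (mulmxA (F *m F^T)) G2F mul1mx.
- by rewrite MX !trmx_mul trmxK sG1 mulmxA.
- by rewrite XM !trmx_mul trmxK sG2 mulmxA.
Qed.

Lemma mp_pinvP p q (M : 'M[R]_(p, q)) : is_MP_inverse M (mp_pinv M).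
Proof.
apply: (xgetPex 0); rewrite -(mulmx_base M); eexists.
apply: is_MP_inverse_rank_factor; last exact: row_base_free.
by rewrite /row_free mxrank_tr; have := col_base_full M; rewrite /row_full.
Qed.

Lemma mp_pinv_range p q (M : 'M[R]_(p, q)) (z : 'cV[R]_p) :
  (forall r : 'cV[R]_p, M^T *m r = 0 -> r^T *m z = 0) -> M *m (mp_pinv M *m z) = z.
Proof.
move=> zperp; have [MXM _ sMX _] := mp_pinvP M.
set r := z - M *m (mp_pinv M *m z).
have Mr0 : M^T *m r = 0.
  have MtMX : M^T *m (M *m mp_pinv M) = M^T by rewrite -{1}sMX -trmx_mul MXM.
  by rewrite /r mulmxBr (mulmxA M) (mulmxA M^T) MtMX subrr.
suff /trmx_mul_self_eq0 /eqP : r^T *m r = 0 by rewrite subr_eq0 => /eqP.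
have -> : r^T *m r = r^T *m z - (M^T *m r)^T *m (mp_pinv M *m z).
  by rewrite trmx_mul trmxK -(mulmxA r^T M) -mulmxBr.
by rewrite zperp // Mr0 linear0 mul0mx subr0.
Qed.

Lemma mp_pinv_ker p q r (M : 'M[R]_(p, q)) (Z : 'M[R]_(q, r)) :
  M *m Z = 0 -> Z^T *m mp_pinv M = 0.
Proof.
have [_ XMX _ sXM] := mp_pinvP M; move=> MZ0.
by rewrite -XMX !mulmxA -(mulmxA _ _ M) -sXM -trmx_mul -mulmxA MZ0 mulmx0 linear0 !mul0mx.
Qed.

End MoorePenrose.

Local Open Scope classical_set_scope.

Section SpectralBounds.
Variable R : realType.

Lemma bform1_CS k (a b : 'cV[R]_k) : bform 1%:M a b ^+ 2 <= nsq a * nsq b.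
Proof. by rewrite !nsqE; apply: bform_CS; rewrite ?trmx1 // => x; rewrite -nsqE nsq_ge0. Qed.

Lemma bform1_le k (a b : 'cV[R]_k) : 2 * bform 1%:M a b <= nsq a + nsq b.
Proof.
have := nsq_ge0 (a - b); rewrite !nsqE !(bformDl, bformDr, bformNl, bformNr).
by rewrite (bform_tr _ b a) trmx1; lra.
Qed.

Definition frob p q (A : 'M[R]_(p, q)) : R := \sum_i nsq (row i A)^T.

Lemma frob_ge0 p q (A : 'M[R]_(p, q)) : 0 <= frob A.
Proof. by apply: sumr_ge0 => i _; apply: nsq_ge0. Qed.

Lemma nsq_mulmx_le_frob p q (A : 'M[R]_(p, q)) x : nsq (A *m x) <= frob A * nsq x.
Proof.
rewrite /frob {1}/nsq mulr_suml; apply: ler_sum => i _.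
have -> : (A *m x) i 0 = bform 1%:M (row i A)^T x.
  by rewrite bform1E mxE; apply: eq_bigr => j _; rewrite !mxE.
exact: bform1_CS.
Qed.

Lemma bform_le_frob k (G : 'M[R]_k) x : bform G x x <= (1 + frob G) / 2 * nsq x.
Proof.
rewrite bform_mulmx; have := bform1_le x (G *m x).
have := nsq_mulmx_le_frob G x; have := nsq_ge0 x; lra.
Qed.

(* With y = G^-1 x, Cauchy-Schwarz for G bounds nsq x ^ 2 = (x^T G y) ^ 2 by
   (x^T G x) (y^T G y), and y^T G y = y^T x is O(nsq x). *)
Lemma coercive_unitmx k (G : 'M[R]_k) : G^T = G -> (forall x, 0 <= bform G x x) ->
  G \in unitmx -> coercive G.
Proof.
move=> sG psd uG; set K := frob (invmx G); have K0 : 0 <= K := frob_ge0 _.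
exists (2 / (K + 1)); first by apply: divr_gt0 => //; lra.
move=> x; set y := invmx G *m x.
have Gxy : nsq x = bform G x y.
  by rewrite nsqE /bform /y mulmxA -(mulmxA _ G) mulmxV // !mulmx1.
have Gyy : bform G y y = bform 1%:M y x.
  by rewrite /bform /y mulmx1 -(mulmxA _ G) (mulmxA G) mulmxV // mul1mx.
have CS := bform_CS x y sG psd; rewrite -Gxy in CS.
have ny : nsq y <= K * nsq x by apply: nsq_mulmx_le_frob.
have Gyy_le : bform G y y <= (K + 1) / 2 * nsq x.
  by rewrite Gyy; have := bform1_le y x; lra.
have [x0|xn0] := eqVneq (nsq x) 0; first by rewrite x0 mulr0.
have xp : 0 < nsq x by rewrite lt_def xn0 nsq_ge0.
have le_x : nsq x <= (K + 1) / 2 * bform G x x.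
  rewrite -(ler_pM2l xp) -expr2; apply: (le_trans CS).
  by have := psd x; nra.
by rewrite mulrC -ler_pdivlMr ?divr_gt0 ?invf_div 1?mulrC //; lra.
Qed.

Lemma posdef_coercive k (W : 'M[R]_k) : posdef W -> coercive W.
Proof.
move=> pdW; set H := 2^-1 *: (W + W^T).
have sH : H^T = H by rewrite /H linearZ /= linearD /= trmxK addrC.
have HW x : bform H x x = bform W x x by rewrite -bform_sym_part.
have psdH x : 0 <= bform H x x.
  by rewrite HW; have [->|/pdW/ltW] := eqVneq x 0; rewrite ?bform0l.
have uH : H \in unitmx.
  rewrite -row_free_unit; apply: inj_row_free => v vH0.
  have : bform W v^T v^T = 0 by rewrite -HW /bform trmxK vH0 mul0mx mxE.
  apply: contra_eq => vn0; apply/lt0r_neq0/pdW.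
  by apply: contraNneq vn0 => /eqP; rewrite trmx_eq0.
by have [c c0 cH] := coercive_unitmx sH psdH uH; exists c => // x; rewrite -HW.
Qed.

Lemma nsq_homogeneous_le k (f : 'cV[R]_k -> R) c :
  (forall t x, f (t *: x) = t ^+ 2 * f x) ->
  (forall x, nsq x = 1 -> f x <= c) -> forall x, f x <= c * nsq x.
Proof.
move=> fZ f_le x; have [x0|xn0] := eqVneq x 0.
  by rewrite x0 -(scale0r 0) fZ nsqZ expr0n !mul0r mulr0.
have xp := nsq_gt0 xn0; set t := Num.sqrt (nsq x).
have tp : 0 < t by rewrite sqrtr_gt0.
have t2 : t ^+ 2 = nsq x by rewrite sqr_sqrtr // ltW.
have := f_le (t^-1 *: x); rewrite fZ nsqZ exprVn t2 mulVf ?gt_eqF // => /(_ erefl).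
by rewrite -t2 -(ler_pM2l (exprn_gt0 2 tp)) mulrA mulfV ?mul1r ?gt_eqF ?exprn_gt0 // mulrC.
Qed.

(* mu is the supremum of the Rayleigh quotient: mu I - H is positive
   semidefinite but not coercive, hence singular. *)
Lemma sym_rayleigh_eigenvalue k (H : 'M[R]_k.+1) : H^T = H ->
  exists2 mu, eigenvalue H mu & forall x, bform H x x <= mu * nsq x.
Proof.
move=> sH; pose E := [set bform H x x | x in [set x | nsq x = 1]].
have supE : has_sup E.
  split; last first.
    by exists ((1 + frob H) / 2) => _ [x /= x1 <-]; have := bform_le_frob H x; rewrite x1 mulr1.
  pose y : 'cV[R]_k.+1 := const_mx 1.
  have yp : 0 < nsq y.
    by rewrite /nsq; under eq_bigr do rewrite mxE expr1n; rewrite sumr_const card_ord ltr0n.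
  set t := Num.sqrt (nsq y); have tp : 0 < t by rewrite sqrtr_gt0.
  exists (bform H (t^-1 *: y) (t^-1 *: y)), (t^-1 *: y) => //=.
  by rewrite nsqZ exprVn sqr_sqrtr ?mulVf ?gt_eqF // ltW.
set mu := sup E.
have Hmu x : bform H x x <= mu * nsq x.
  apply: (nsq_homogeneous_le (f := fun y => bform H y y)) => [t y|y y1].
    by rewrite bformZl bformZr mulrA expr2.
  by apply: sup_upper_bound => //; exists y.
exists mu => //; set G := mu%:M - H.
have GE y : bform G y y = mu * nsq y - bform H y y.
  by rewrite bformB -scalemx1 bformZ nsqE.
have sG : G^T = G by rewrite /G linearB /= tr_scalar_mx sH.
have psdG y : 0 <= bform G y y by rewrite GE subr_ge0.
have nuG : G \notin unitmx.
  apply/negP => /(coercive_unitmx sG psdG) [c c0 cG].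
  suff : mu <= mu - c by lra.
  apply: ge_sup; first by case: supE.
  by move=> _ [y /= y1 <-]; have := cG y; rewrite GE y1; lra.
have [v vG0 vn0] : exists2 v : 'rV[R]_k.+1, v *m G = 0 & v != 0.
  apply: contrapT => noker; move: nuG; rewrite -row_free_unit => /negP; apply.
  apply: inj_row_free => v vG0; apply/eqP; apply/negPn/negP => vn0.
  by apply: noker; exists v.
apply/eigenvalueP; exists v => //.
by move: vG0; rewrite mulmxBr mul_mx_scalar => /eqP; rewrite subr_eq0 => /eqP <-.
Qed.

Lemma lambda_max_bound k (H : 'M[R]_k) x : H^T = H ->
  bform H x x <= lambda_max H * nsq x.
Proof.
case: k H x => [|k] H x sH; first by rewrite [x]flatmx0 bform0l /nsq big_ord0 mulr0.
have [mu eig_mu Hmu] := sym_rayleigh_eigenvalue sH.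
apply: (le_trans (Hmu x)); apply: ler_wpM2r; first exact: nsq_ge0.
apply: sup_upper_bound => //; split; first by exists mu.
exists mu => a /eigenvalueP [w wH wn0].
have wtn0 : w^T != 0 by apply: contraNneq wn0 => /eqP; rewrite trmx_eq0.
have : bform H w^T w^T = a * nsq w^T.
  by rewrite nsqE /bform trmxK mulmx1 wH -scalemxAl [LHS]mxE.
by move: (Hmu w^T) => /[swap] ->; rewrite ler_pM2r // nsq_gt0.
Qed.

Lemma spec_norm_bound p q (L : 'M[R]_(p, q)) x :
  nsq (L *m x) <= spec_norm L ^+ 2 * nsq x.
Proof.
have euclE k (y : 'cV[R]_k) : eucl_norm y = Num.sqrt (nsq y) by [].
apply: (nsq_homogeneous_le (f := fun y => nsq (L *m y))) => [t y|y y1].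
  by rewrite -scalemxAr nsqZ.
have supL : has_sup [set eucl_norm (L *m x) | x in [set x | eucl_norm x = 1]].
  split; first by exists (eucl_norm (L *m y)); exists y; rewrite //= euclE y1 sqrtr1.
  exists (Num.sqrt (frob L)) => r [z /= z1 <-]; rewrite !euclE in z1 *.
  rewrite ler_sqrt ?frob_ge0 //; apply: le_trans (nsq_mulmx_le_frob L z) _.
  by rewrite -(sqr_sqrtr (nsq_ge0 z)) z1 expr1n mulr1.
have : eucl_norm (L *m y) <= spec_norm L.
  by apply: sup_upper_bound => //; exists y; rewrite //= euclE y1 sqrtr1.
rewrite euclE => le_sp; rewrite -(sqr_sqrtr (nsq_ge0 (L *m y))).
have sp0 : 0 <= spec_norm L := le_trans (sqrtr_ge0 _) le_sp.
by rewrite ler_pXn2r ?nnegrE ?sqrtr_ge0.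
Qed.

Lemma spec_norm_bound_tr p q (L : 'M[R]_(p, q)) x :
  nsq (L^T *m x) <= spec_norm L ^+ 2 * nsq x.
Proof.
set z := L^T *m x.
have zE : nsq z = bform 1%:M x (L *m z).
  by rewrite !nsqE /bform !mulmx1 /z trmx_mul trmxK !mulmxA.
have [z0|zn0] := eqVneq (nsq z) 0; first by rewrite z0 mulr_ge0 ?sqr_ge0 ?nsq_ge0.
have zp : 0 < nsq z by rewrite lt_def zn0 nsq_ge0.
have : nsq z * nsq z <= nsq x * spec_norm L ^+ 2 * nsq z.
  rewrite -expr2 zE -mulrA; apply: (le_trans (bform1_CS _ _)).
  by rewrite -zE ler_wpM2l ?nsq_ge0 ?spec_norm_bound.
by rewrite ler_pM2r // mulrC.
Qed.

End SpectralBounds.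

Section EntrywiseConvergence.
Variable R : realType.

Lemma cvg_mulmx p q (A : 'M[R]_(p, q)) (f : nat -> 'cV[R]_q) (l : 'cV[R]_q) :
  (forall j, (fun k => f k j 0) @ \oo --> l j 0) ->
  forall i, (fun k => (A *m f k) i 0) @ \oo --> (A *m l) i 0.
Proof.
move=> fl i; rewrite mxE; under eq_fun do rewrite mxE.
apply: (cvg_big (op := +%R) add_continuous) => j _; exact: cvgMl_tmp.
Qed.

Lemma nsq_geometric_cvg0 q (f : nat -> 'cV[R]_q) C r :
  0 <= C -> 0 <= r < 1 -> (forall k, nsq (f k) <= C * r ^+ k) ->
  forall i, (fun k => f k i 0) @ \oo --> 0.
Proof.
move=> C0 /andP[r0 r1] f_le i; set s := Num.sqrt C; set t := Num.sqrt r.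
have s0 : 0 <= s := sqrtr_ge0 _.
have t0 : 0 <= t := sqrtr_ge0 _.
have t1 : t < 1 by rewrite /t -sqrtr1 ltr_sqrt // ltr01.
have fk_le k : `|f k i 0| <= s * t ^+ k.
  have st2 : C * r ^+ k = (s * t ^+ k) ^+ 2.
    by rewrite exprMn -exprM mulnC exprM !sqr_sqrtr.
  rewrite -(ler_pXn2r (n := 2)) ?nnegrE ?mulr_ge0 ?exprn_ge0 //.
  by rewrite -st2 real_normK ?num_real //; apply: le_trans (f_le k); exact: nsq_entry_le.
have st0 : (fun k => s * t ^+ k) @ \oo --> 0.
  by rewrite -(mulr0 s); apply: cvgMl_tmp; apply: cvg_expr; rewrite ger0_norm.
have nst0 : (fun k => - (s * t ^+ k)) @ \oo --> 0 by rewrite -oppr0; apply: cvgN.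
apply: (squeeze_cvgr _ nst0 st0).
by apply: nearW => k; rewrite -ler_norml fk_le.
Qed.

End EntrywiseConvergence.

Section SaddlePointSplitting.
Variables (R : realType) (n m : nat) (W P : 'M[R]_n) (B : 'M[R]_(m, n)).
Hypothesis W_coercive : coercive W.
Hypothesis PW_coercive : coercive (2%:R *: P - W).
Hypothesis PW_sym : (P - W)^T = P - W.

Let A : 'M[R]_(n + m) := block_mx W B^T (- B) 0.
Let M : 'M[R]_(n + m) := block_mx P B^T (- B) 0.
Let X := mp_pinv M.

Lemma P_coercive : coercive P.
Proof.
have [h h0 hW] := W_coercive; have [c c0 cPW] := PW_coercive.
exists ((h + c) / 2) => [|x]; first by apply: divr_gt0; lra.
by have := hW x; have := cPW x; rewrite bformB bformZ; lra.
Qed.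

Lemma split_polar_bound : exists2 eps, 0 < eps <= 1 &
  forall a b, 2 * bform (P - W) a b <= (1 - eps) * (bform P a a + bform P b b).
Proof.
have [h h0 hW] := W_coercive; have [c c0 cPW] := PW_coercive.
set C := (1 + frob P) / 2; have C0 : 0 < C by rewrite divr_gt0 // ltr_wpDr ?frob_ge0.
(* eps P <= W and eps P <= 2 P - W, i.e. |z^T (P - W) z| <= (1 - eps) z^T P z. *)
set eps := Num.min (h / C) (Num.min (c / C) 1).
have eps0 : 0 < eps.
  by rewrite /eps !lt_min ltr01 andbT; apply/andP; split; exact: divr_gt0.
have epsC_h : eps * C <= h by rewrite -ler_pdivlMr // /eps ge_min lexx.
have epsC_c : eps * C <= c by rewrite -ler_pdivlMr // /eps !ge_min lexx orbT.
exists eps; first by rewrite eps0 /eps !ge_min lexx !orbT.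
move=> a b; rewrite mulrDr -[_ * bform P a a]bformZ -[_ * bform P b b]bformZ.
apply: bform_polar_le => // z; rewrite bformZ bformB ler_norml.
have Pz : eps * bform P z z <= eps * C * nsq z.
  by rewrite -mulrA; apply: ler_wpM2l; [exact: ltW | exact: bform_le_frob].
have nz := nsq_ge0 z; have := hW z; have := cPW z; rewrite bformB bformZ.
have := ler_wpM2r nz epsC_h; have := ler_wpM2r nz epsC_c; lra.
Qed.

Lemma split_ker_tr (r : 'cV[R]_(n + m)) :
  M^T *m r = 0 -> usubmx r = 0 /\ B^T *m dsubmx r = 0.
Proof.
rewrite -[r]vsubmxK /M tr_block_mx mul_block_col -col_mx0 => /eq_col_mx [].
rewrite col_mxKu col_mxKd linearN /= mulNmx trmx0 mul0mx addr0 trmxK.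
set u := usubmx r; set v := dsubmx r => /eqP; rewrite subr_eq0 => /eqP PuBv Bu0.
have Puu0 : bform P u u = 0.
  by rewrite bform_tr /bform -mulmxA PuBv mulmxA -trmx_mul Bu0 linear0 mul0mx mxE.
have [c c0 cP] := P_coercive.
have u0 : u = 0.
  apply: nsq_eq0; apply/eqP; rewrite eq_le nsq_ge0 andbT.
  by have := cP u; rewrite Puu0 pmulr_rle0.
by split => //; rewrite -PuBv u0 mulmx0.
Qed.

Lemma split_range (w : 'cV[R]_(n + m)) : M *m (X *m (A *m w)) = A *m w.
Proof.
apply: mp_pinv_range => r /split_ker_tr [u0 Bv0].
rewrite -[r]vsubmxK u0 tr_col_mx trmx0 /A -[w]vsubmxK mul_block_col mul_row_col.
rewrite !mul0mx add0r addr0 mulNmx mulmxN mulmxA -[_ *m B]trmxK trmx_mul trmxK Bv0.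
by rewrite linear0 mul0mx oppr0.
Qed.

Lemma split_lower_orth p (Z : 'M[R]_(m, p)) (f : 'cV[R]_(n + m)) :
  B^T *m Z = 0 -> Z^T *m dsubmx (X *m f) = 0.
Proof.
move=> BZ0; have MZ0 : M *m col_mx 0 Z = 0.
  by rewrite /M mul_block_col !mulmx0 mul0mx BZ0 !addr0 col_mx0.
have := congr1 (mulmx^~ f) (mp_pinv_ker MZ0).
rewrite mul0mx -mulmxA tr_col_mx trmx0 -[X *m f]vsubmxK mul_row_col mul0mx add0r.
by rewrite col_mxKd.
Qed.

Let step (e : 'cV[R]_(n + m)) := e - X *m (A *m e).

Lemma split_step_blocks e :
  P *m usubmx (step e) + B^T *m dsubmx (step e) = (P - W) *m usubmx e /\
  B *m usubmx (step e) = 0.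
Proof.
have : M *m step e = M *m e - A *m e by rewrite mulmxBr split_range.
set e' := step e; rewrite -[e']vsubmxK -[e]vsubmxK /M /A !mul_block_col.
rewrite opp_col_mx add_col_mx !col_mxKu !col_mxKd => /eq_col_mx [-> Bu0].
split; first by rewrite mulmxBl opprD addrACA subrr addr0.
by move/eqP: Bu0; rewrite mul0mx !addr0 subrr mulNmx oppr_eq0 => /eqP.
Qed.

Lemma split_step_lower p (Z : 'M[R]_(m, p)) e :
  B^T *m Z = 0 -> Z^T *m dsubmx (step e) = Z^T *m dsubmx e.
Proof. by move=> BZ0; rewrite linearB /= mulmxBr split_lower_orth // subr0. Qed.

Let energy (e : 'cV[R]_(n + m)) := bform P (usubmx e) (usubmx e).

Lemma split_energy_contract :
  exists2 rho, 0 <= rho < 1 & forall e, energy (step e) <= rho * energy e.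
Proof.
have [eps /andP[eps0 eps1] polar] := split_polar_bound.
exists ((1 - eps) / (1 + eps)).
  by rewrite divr_ge0 ?ltr_pdivrMr /=; lra.
move=> e; have [top Bu0] := split_step_blocks e.
have qE : energy (step e) = bform (P - W) (usubmx (step e)) (usubmx e).
  rewrite /energy /bform -!mulmxA -top mulmxDr [_ *m (B^T *m _)]mulmxA -trmx_mul.
  by rewrite Bu0 linear0 mul0mx addr0.
have := polar (usubmx (step e)) (usubmx e).
rewrite -qE -/(energy e) -/(energy (step e)) => le2.
by rewrite mulrAC ler_pdivlMr; lra.
Qed.

Lemma split_usub_cvg0 e0 i : (fun k => usubmx (iter k step e0) i 0) @ \oo --> 0.
Proof.
have [rho /andP[rho0 rho1] contract] := split_energy_contract.
have [c c0 cP] := P_coercive.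
have decay k : energy (iter k step e0) <= rho ^+ k * energy e0.
  elim: k => [|k IH]; first by rewrite mul1r.
  by rewrite iterS exprS -mulrA; apply: le_trans (contract _) (ler_wpM2l rho0 IH).
have q0 : 0 <= energy e0 by apply: le_trans (cP _); rewrite mulr_ge0 ?nsq_ge0 ?ltW.
apply: (@nsq_geometric_cvg0 _ _ _ (energy e0 / c) rho) => [||k].
- exact: divr_ge0 q0 (ltW c0).
- by rewrite rho0.
rewrite mulrAC ler_pdivlMr // mulrC; apply: le_trans (cP _) _.
by rewrite mulrC; exact: decay.
Qed.

(* K is the orthogonal projector onto ker B^T. *)
Let Y := mp_pinv B^T.
Let K := 1%:M - Y *m B^T.

Lemma trB_kerproj : B^T *m K = 0.
Proof. by have [BYB _ _ _] := mp_pinvP B^T; rewrite mulmxBr mulmx1 mulmxA BYB subrr. Qed.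

Lemma tr_kerproj : K^T = K.
Proof. by have [_ _ _ sYB] := mp_pinvP B^T; rewrite linearB /= trmx1 sYB. Qed.

Lemma split_dsub_cvg e0 i :
  (fun k => dsubmx (iter k step e0) i 0) @ \oo --> (K *m dsubmx e0) i 0.
Proof.
set e := fun k => iter k step e0.
have Kv k : K *m dsubmx (e k) = K *m dsubmx e0.
  elim: k => // k IH; rewrite -IH -{1}tr_kerproj /e iterS split_step_lower.
    by rewrite tr_kerproj.
  exact: trB_kerproj.
have vE k : dsubmx (e k.+1) = Y *m (B^T *m dsubmx (e k.+1)) + K *m dsubmx e0.
  by rewrite -(Kv k.+1) mulmxA -mulmxDl addrC subrK mul1mx.
have BvE k : B^T *m dsubmx (e k.+1) = (P - W) *m usubmx (e k) - P *m usubmx (e k.+1).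
  by have [top _] := split_step_blocks (e k); rewrite /e iterS -top addrC addKr.
have u0 j : (fun k => usubmx (e k) j 0) @ \oo --> (0 : 'cV[R]_n) j 0.
  by rewrite mxE; exact: split_usub_cvg0.
have u0S j : (fun k => usubmx (e k.+1) j 0) @ \oo --> (0 : 'cV[R]_n) j 0.
  by have := u0 j; rewrite -cvg_shiftS.
have Bv0 j : (fun k => (B^T *m dsubmx (e k.+1)) j 0) @ \oo --> (0 : 'cV[R]_n) j 0.
  have entryB (C D : 'cV[R]_n) : (C - D) j 0 = C j 0 - D j 0 by rewrite !mxE.
  under eq_fun do rewrite BvE entryB.
  have -> : (0 : 'cV[R]_n) j 0 = ((P - W) *m (0 : 'cV[R]_n)) j 0 - (P *m (0 : 'cV[R]_n)) j 0.
    by rewrite !mulmx0 !mxE subr0.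
  by apply: cvgB; apply: cvg_mulmx.
have entryD (C D : 'cV[R]_m) : (C + D) i 0 = C i 0 + D i 0 by rewrite !mxE.
have vS : (fun k => dsubmx (e k.+1) i 0) @ \oo -->
    (Y *m (0 : 'cV[R]_n)) i 0 + (K *m dsubmx e0) i 0.
  have -> : (fun k => dsubmx (e k.+1) i 0) =
      (fun k => (Y *m (B^T *m dsubmx (e k.+1))) i 0 + (K *m dsubmx e0) i 0).
    by apply: funext => k; rewrite {1}vE entryD.
  by apply: cvgD; [apply: cvg_mulmx | exact: cvg_cst].
rewrite mulmx0 [(0 : 'cV[R]_m) i 0]mxE add0r in vS.
by rewrite -(cvg_shiftS (fun k => dsubmx (e k) i 0)).
Qed.

Lemma iterate_seq_error y x0 k :
  iterate_seq X A (A *m y) x0 k = y + iter k step (x0 - y).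
Proof.
elim: k => [|k IH]; first by rewrite addrC subrK.
rewrite /iterate_seq iterS -/(iterate_seq X A (A *m y) x0 k) IH iterS /step.
by rewrite mulmxDr opprD addrA subrr add0r mulmxN addrA.
Qed.

Theorem split_iteration_convergent b :
  (exists y, b = A *m y) -> iteration_convergent X A b.
Proof.
move=> [y ->] x0; set e0 := x0 - y.
exists (y + col_mx 0 (K *m dsubmx e0)); split.
  rewrite mulmxDr /A mul_block_col !mulmx0 mul0mx mulmxA trB_kerproj.
  by rewrite mul0mx !addr0 col_mx0 addr0.
move=> i j; rewrite (ord1 j).
have -> : (fun k => iterate_seq X A (A *m y) x0 k i 0) =
    (fun k => y i 0 + iter k step e0 i 0).
  by apply: funext => k; rewrite iterate_seq_error mxE.
rewrite mxE; apply: cvgD; first exact: cvg_cst.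
case: (split_ordP i) => i' ->.
- have -> : (fun k => iter k step e0 (lshift m i') 0) =
      (fun k => usubmx (iter k step e0) i' 0) by apply: funext => k; rewrite mxE.
  by rewrite col_mxEu mxE; exact: split_usub_cvg0.
- have -> : (fun k => iter k step e0 (rshift n i') 0) =
      (fun k => dsubmx (iter k step e0) i' 0) by apply: funext => k; rewrite mxE.
  by rewrite col_mxEd; exact: split_dsub_cvg.
Qed.

End SaddlePointSplitting.

Section SkewTriangularSplitting.
Variable R : realType.

Lemma skew_strict_lower n (S : 'M[R]_n) :
  S^T = - S -> S = strict_lower S - (strict_lower S)^T.
Proof.
move=> skS; apply/matrixP => i j; rewrite !mxE.
have Sji : S j i = - S i j by have := congr1 (fun T : 'M[R]_n => T i j) skS; rewrite !mxE.
case: (ltngtP i j) => ij /=; first by rewrite sub0r Sji opprK.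
  by rewrite subr0.
by move: Sji; rewrite (val_inj ij) subrr; lra.
Qed.

Lemma ssor_factor_decomp n (L : 'M[R]_n) w : w != 0 ->
  w^-1 *: ((1%:M + w *: L) *m (1%:M + w *: - L^T)) =
  w^-1 *: 1%:M - w *: (L *m L^T) + (L - L^T).
Proof.
move=> w0; rewrite mulmxDl !mulmxDr !mul1mx !mulmx1 -!scalemxAl -!scalemxAr scalerA.
rewrite mulmxN !scalerDr !scalerA mulVf // !scale1r -expr2.
have -> : w^-1 * w ^+ 2 = w by rewrite expr2 mulrA mulVf // mul1r.
by rewrite scalerN addrACA [RHS]addrACA (addrC (- L^T)).
Qed.

Lemma bform_ssor_factor n (L : 'M[R]_n) w x : w != 0 ->
  bform (w^-1 *: ((1%:M + w *: L) *m (1%:M + w *: - L^T))) x x =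
  w^-1 * nsq x - w * nsq (L^T *m x).
Proof.
move=> w0; rewrite ssor_factor_decomp // bformD (bform_skew (S := L - L^T)); last first.
  by rewrite linearB /= trmxK opprB.
rewrite addr0 bformB !bformZ -nsqE [nsq (L^T *m x)]nsqE /bform mulmx1 trmx_mul trmxK.
by rewrite !mulmxA.
Qed.

Lemma omega_bound_gap (lam a w : R) : 0 <= a -> 0 < w ->
  w < (- lam + Num.sqrt (lam ^+ 2 + 16 * a)) / (4 * a) ->
  0 < 2 * (w^-1 - w * a) - lam.
Proof.
move=> a0 w0 w_lt; rewrite -(pmulr_rgt0 _ w0).
have -> : w * (2 * (w^-1 - w * a) - lam) = 2 - (2 * a * w ^+ 2 + lam * w).
  by field; rewrite gt_eqF.
rewrite subr_gt0; move: w_lt.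
have [->|an0] := eqVneq a 0; first by rewrite !mulr0 invr0 mulr0; lra.
have ap : 0 < a by rewrite lt_def an0.
set s := Num.sqrt _; have s0 : 0 <= s := sqrtr_ge0 _.
have s2 : s ^+ 2 = lam ^+ 2 + 16 * a by rewrite sqr_sqrtr // addr_ge0 ?sqr_ge0 ?mulr_ge0.
rewrite ltr_pdivlMr ?mulr_gt0 // => w_lt.
have [t0|t0] := leP 0 (4 * a * w + lam); last by nra.
have : (4 * a * w + lam) ^+ 2 < s ^+ 2 by rewrite ltr_pXn2r ?nnegrE //; lra.
by rewrite s2; nra.
Qed.

End SkewTriangularSplitting.

Theorem theorem3 (R : realType) (n m : nat) (W : 'M[R]_n) (B : 'M[R]_(m, n))
  (b : 'cV[R]_(n + m)) (omega : R) :
  posdef W ->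
  let H := 2^-1 *: (W + W^T) in
  let S := 2^-1 *: (W - W^T) in
  let Ls := strict_lower S in
  let Us := - Ls^T in
  Ls != 0 ->
  (\rank B < m)%N -> (m <= n)%N ->
  let A : 'M[R]_(n + m) := block_mx W B^T (- B) 0 in
  (exists y : 'cV[R]_(n + m), b = A *m y) ->
  0 < omega ->
  let P := omega^-1 *: ((1%:M + omega *: Ls) *m (1%:M + omega *: Us)) in
  let M : 'M[R]_(n + m) := block_mx P B^T (- B) 0 in
  let lam := lambda_max H in
  let l2 := spec_norm Ls in
  omega < (- lam + Num.sqrt (lam ^+ 2 + 16 * l2 ^+ 2)) / (4 * l2 ^+ 2) ->
  iteration_convergent (mp_pinv M) A b.
Proof.
move=> pdW H S Ls Us _ _ _ A b_range omega_gt0 P M lam l2 omega_lt.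
have omega_neq0 : omega != 0 by rewrite gt_eqF.
have skS : S^T = - S by rewrite /S linearZ /= linearB /= trmxK -scalerN opprB.
have sH : H^T = H by rewrite /H linearZ /= linearD /= trmxK addrC.
have WHS : W = H + S by apply/matrixP => i j; rewrite !mxE; lra.
have PE : P = omega^-1 *: 1%:M - omega *: (Ls *m Ls^T) + S.
  by rewrite /P /Us ssor_factor_decomp // -skew_strict_lower.
apply: split_iteration_convergent b_range.
- exact: posdef_coercive.
- exists (2 * (omega^-1 - omega * l2 ^+ 2) - lam) => [|x].
    exact: omega_bound_gap (sqr_ge0 l2) omega_gt0 omega_lt.
  rewrite bformB bformZ bform_ssor_factor // WHS bformD (bform_skew x skS) addr0.
  move: (lambda_max_bound x sH) (ler_wpM2l (ltW omega_gt0) (spec_norm_bound_tr Ls x)).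
  rewrite -/lam -/l2; lra.
- rewrite PE WHS opprD addrACA subrr addr0 linearB /= linearB /= linearZ /= sH.
  by rewrite linearZ /= trmx_mul trmxK trmx1.
Qed.
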